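(* Let $b^{(1)},b^{(2)}\in Diag((\hbar))$ be constant. On families of pairwise commuting operators $L_\alpha=\partial/\partial x^\alpha-\hbar^{-1}C_\alpha(x)$, $\alpha=1,\dots,n$, admitting a dressing transformation $T$, consider the two flows $$\frac{\partial L_\alpha}{\partial t^i}=[M^{(i)}_{\le-1},L_\alpha],\qquad M^{(i)}=Tb^{(i)}T^{-1},\quad i=1,2.$$ These flows commute: computing mixed second derivatives by means of these equations, $\frac{\partial}{\partial t^1}\frac{\partial L_\alpha}{\partial t^2}=\frac{\partial}{\partial t^2}\frac{\partial L_\alpha}{\partial t^1}$ for all $\alpha$.
   Context: $C_\alpha$: $Mat(n,\mathbb C)$-valued analytic functions of $x$; $Diag$: diagonal matrices; $Diag((\hbar))$: formal Laurent series in $\hbar$ with diagonal coefficients. A dressing transformation is an invertible $T\in Mat(n,\mathbb C)[[\hbar]]$ with $T^{-1}L_\alpha T=\partial/\partial x^\alpha+h_\alpha$, $h_\alpha\in\hbar^{-1}Diag[[\hbar]]$ for all $\alpha$; it is assumed that the leading terms of $h_\alpha$ span $Diag$ (as in the semisimple Frobenius manifold setting), so $T$ is unique up to right multiplication by diagonal series and $M^{(i)}$ is well defined. For $v=\sum_lv_l\hbar^l$, $v_{\le k}=\sum_{l\le k}v_l\hbar^l$. $[\partial+A,M]=\partial M+[A,M]$; $\partial L_\alpha/\partial t$ means $-\hbar^{-1}\partial C_\alpha/\partial t$. In computing $\partial_{t^1}\partial_{t^2}L_\alpha$ one differentiates $[M^{(2)}_{\le-1},L_\alpha]$ along the $t^1$-flow,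 including the induced variation of $M^{(2)}$. *)

(* Formal Laurent series in hbar with coefficients in
   n x n matrices over a commutative differential ring A. *)
From HB Require Import structures.
From mathcomp Require Import all_boot all_order all_algebra.
From mathcomp Require Import zify.
Set Implicit Arguments. Unset Strict Implicit. Unset Printing Implicit Defensive.
Import Order.TTheory GRing.Theory Num.Theory.
Local Open Scope ring_scope.

Section Laurent.
Variables (A : comPzRingType) (n : nat).

(* sum_k lc k hbar^k, with lc k = 0 for k < lv *)
Record lser := LSer {
  lc :> int -> 'M[A]_n ;
  lv : int ;
  lvP : forall k : int, k < lv -> lc k = 0 }.

Definition lmono (k0 : int) (c : 'M[A]_n) : lser.
Proof. refine (@LSer (fun k => if k == k0 then c else 0) k0 _).
move=> k hk; case: eqP => [ek|//]; by rewrite ek ltxx in hk. Defined.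

Definition lone : lser := lmono 0 1%:M.

Definition ladd (f g : lser) : lser.
Proof. refine (@LSer (fun k => f k + g k) (Order.min (lv f) (lv g)) _).
move=> k; rewrite lt_min => /andP[hf hg]; by rewrite !lvP ?addr0. Defined.

Definition lopp (f : lser) : lser.
Proof. refine (@LSer (fun k => - f k) (lv f) _).
move=> k hk; by rewrite lvP ?oppr0. Defined.

Definition lsub (f g : lser) : lser := ladd f (lopp g).

Definition lmul (f g : lser) : lser.
Proof. refine (@LSer (fun k => \sum_(i < (absz (k - lv f - lv g)%R).+1)
                  f (lv f + i%:Z) *m g (k - (lv f + i%:Z))) (lv f + lv g) _).
move=> k hk; apply: big1 => i _.
rewrite (@lvP g) ?mulmx0 //; lia. Defined.

Definition lbr (f g : lser) : lser := lsub (lmul f g) (lmul g f).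

Definition ltrunc (f : lser) : lser.
Proof. refine (@LSer (fun k => if k <= -1 then f k else 0) (lv f) _).
move=> k hk; case: ifP => // _; exact: lvP. Defined.

Definition ldiff (d : {additive A -> A}) (f : lser) : lser.
Proof. refine (@LSer (fun k => map_mx d (f k)) (lv f) _).
move=> k hk; rewrite lvP //; apply/matrixP => i j; by rewrite !mxE raddf0. Defined.

Definition lseq (f g : lser) : Prop := forall k, f k = g k.

(* [Y, d_alpha + X]  (operator commutator, Y a multiplication operator) *)
Definition opbr (d : {additive A -> A}) (Y X : lser) : lser :=
  lsub (lbr Y X) (ldiff d Y).

(* [d_a + X, d_b + Y] = d_a Y - d_b X + [X, Y] (a multiplication operator) *)
Definition opcomm (da db : {additive A -> A}) (X Y : lser) : lser :=
  ladd (lsub (ldiff da Y) (ldiff db X)) (lbr X Y).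

(* T^{-1} (d + X) T = d + opconj d T Tinv X *)
Definition opconj (d : {additive A -> A}) (T Tinv X : lser) : lser :=
  ladd (lmul Tinv (ldiff d T)) (lmul (lmul Tinv X) T).

End Laurent.

Definition derivation (A : comPzRingType) (d : {additive A -> A}) : Prop :=
  forall a b : A, d (a * b) = d a * b + a * d b.

(* potential part of L_alpha = d_alpha - hbar^{-1} C_alpha *)
Definition Lpot (A : comPzRingType) (n : nat) (C : 'M[A]_n) : lser A n :=
  lmono (-1) (- C).

(* T is a dressing transformation for the family L_alpha = d_alpha - hbar^{-1} C_alpha:
   T, Tinv in Mat[[hbar]], mutually inverse, T^{-1} L_alpha T = d_alpha + h_alpha with
   h_alpha in hbar^{-1} Diag[[hbar]], and the leading terms of the h_alpha span Diag. *)
Definition dressing (A : comPzRingType) (n : nat) (dx : 'I_n -> {additive A -> A})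
  (C : 'I_n -> 'M[A]_n) (T Tinv : lser A n) : Prop :=
  (forall k : int, k < 0 -> T k = 0) /\ (forall k : int, k < 0 -> Tinv k = 0) /\
  lseq (lmul T Tinv) (lone A n) /\ lseq (lmul Tinv T) (lone A n) /\
  exists h : 'I_n -> lser A n,
    (forall a, lseq (opconj (dx a) T Tinv (Lpot (C a))) (h a)) /\
    (forall a k, is_diag_mx (h a k)) /\
    (forall a (k : int), k < -1 -> h a k = 0) /\
    (forall d : 'M[A]_n, is_diag_mx d ->
       exists c : 'I_n -> A, d = \sum_(a < n) c a *: h a (-1)).

(* Work in the ring of Laurent series in hbar whose coefficients are n x n
   matrices, with finitely many negative powers; derivations of A act on it
   coefficientwise as derivations. Writing X_a = -hbar^-1 C_a and
   N_i = M^(i)_{<= -1}, the flows read D_i X_a = [N_i, X_a] - d_a N_i.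
   Conjugating by T, the series Z_i = T^-1 D_i T - T^-1 N_i T satisfies
   D_i h_a = [h_a, Z_i] + d_a Z_i; as the h_a and D_i h_a are diagonal and the
   leading terms of the h_a span Diag, Z_i is diagonal by induction on the
   hbar-degree. Hence Z_i commutes with b^(j) and D_i M^(j) = [N_i, M^(j)].
   Since M^(1) and M^(2) commute, taking the part of [M^(1), M^(2)] = 0 of
   degree <= -1 gives the zero-curvature equation D_2 N_1 - D_1 N_2 = [N_2, N_1],
   from which D_1 D_2 X_a = D_2 D_1 X_a follows by the Jacobi identity. *)

From HB Require Import structures.
From mathcomp Require Import all_boot all_order all_algebra.
From mathcomp Require Import zify.
From mathcomp.classical Require Import boolp.
Set Implicit Arguments. Unset Strict Implicit. Unset Printing Implicit Defensive.
Import Order.TTheory GRing.Theory Num.Theory.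
Local Open Scope ring_scope.

(* [abel] proves equalities in an abelian group by comparing the integer
   coefficients of the atoms, i.e. of the maximal subterms not built from
   [+], [-] and [0]. *)
Section AbelianNormalForm.
Variable V : zmodType.

Inductive zexpr := ZAtom of nat | ZZero | ZAdd of zexpr & zexpr | ZOpp of zexpr.

Fixpoint zeval (env : seq V) e := match e with
  | ZAtom i => nth 0 env i | ZZero => 0
  | ZAdd e1 e2 => zeval env e1 + zeval env e2 | ZOpp e1 => - zeval env e1 end.

Fixpoint zcoef e (i : nat) : int := match e with
  | ZAtom j => if i == j then 1 else 0 | ZZero => 0
  | ZAdd e1 e2 => zcoef e1 i + zcoef e2 i | ZOpp e1 => - zcoef e1 i end.

Lemma zevalE env e : zeval env e = \sum_(i < size env) nth 0 env i *~ zcoef e i.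
Proof.
elim: e => [j||e1 IH1 e2 IH2|e1 IH1] /=.
- have [lt_j|le_j] := ltnP j (size env); last first.
    rewrite nth_default // big1 // => i _; case: eqP => // e.
    by have := ltn_ord i; rewrite e ltnNge le_j.
  rewrite (bigD1 (Ordinal lt_j)) //= eqxx big1 ?addr0 // => i /eqP ne_ij.
  by case: eqP => // e; case: ne_ij; apply: val_inj.
- by rewrite big1.
- by rewrite IH1 IH2 -big_split; apply: eq_bigr => i _; rewrite mulrzDr.
- by rewrite IH1 -sumrN; apply: eq_bigr => i _; rewrite mulrNz.
Qed.

Lemma zeval_eq env e1 e2 :
  all (fun i => zcoef e1 i == zcoef e2 i) (iota 0 (size env)) ->
  zeval env e1 = zeval env e2.
Proof.
move=> /allP eq_coef; rewrite !zevalE; apply: eq_bigr => i _.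
by rewrite (eqP (eq_coef _ _)) // mem_iota /= add0n.
Qed.

End AbelianNormalForm.

Ltac zmem x l := lazymatch l with
  | nil => constr:(false)
  | cons ?y ?l' => match tt with
                   | _ => let _ := match tt with _ => unify x y end in constr:(true)
                   | _ => zmem x l' end
  end.
Ltac zindex x l := lazymatch l with
  | cons ?y ?l' => match tt with
                   | _ => let _ := match tt with _ => unify x y end in constr:(O)
                   | _ => let k := zindex x l' in constr:(S k) end
  end.
Ltac zatoms t l := lazymatch t with
  | GRing.add ?a ?b => let l := zatoms a l in zatoms b l
  | GRing.opp ?a => zatoms a l
  | GRing.zero => l
  | _ => let b := zmem t l in lazymatch b with true => l | false => constr:(cons t l) end
  end.
Ltac zreify t l := lazymatch t with
  | GRing.add ?a ?b => let x := zreify a l in let y := zreify b l in constr:(ZAdd x y)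
  | GRing.opp ?a => let x := zreify a l in constr:(ZOpp x)
  | GRing.zero => constr:(ZZero)
  | _ => let k := zindex t l in constr:(ZAtom k)
  end.
Ltac abel := lazymatch goal with |- @eq ?V ?a ?b =>
  let l := zatoms a (@nil V) in let l := zatoms b l in
  let ea := zreify a l in let eb := zreify b l in
  change (zeval l ea = zeval l eb); apply: zeval_eq; vm_compute; reflexivity end.

Ltac expand_ring := rewrite ?(mulrDl, mulrDr, mulrBl, mulrBr, mulNr, mulrN, opprK,
  opprD, opprB, mulrA, mul1r, mulr1, mul0r, mulr0, addr0, add0r, oppr0).

Section WindowSum.
Variable V : zmodType.
Implicit Types (u v : int -> V) (a c m : int) (N M : nat).

Definition wsum u a N : V := \sum_(j < N) u (a + j%:Z).

Definition supported_in u a N := forall m, m < a \/ a + N%:Z <= m -> u m = 0.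

Lemma wsum_widen u a N c M : supported_in u a N -> c <= a -> a + N%:Z <= c + M%:Z ->
  wsum u c M = wsum u a N.
Proof.
move=> supp le_ca le_NM; rewrite /wsum.
pose d := absz (a - c)%R.
have eM : M = (d + (N + (M - (d + N))))%N by rewrite /d; lia.
rewrite eM big_split_ord /= big1 ?add0r; last first.
  by move=> j _; apply: supp; left; have := ltn_ord j; rewrite /d; lia.
rewrite big_split_ord /= [X in _ + X]big1 ?addr0; last by move=> j _; apply: supp; right; lia.
by apply: eq_bigr => j _; congr u; rewrite /d; lia.
Qed.

Lemma wsum_window u a N a' N' : supported_in u a N -> supported_in u a' N' ->
  wsum u a N = wsum u a' N'.
Proof.
move=> supp supp'; pose c := Order.min a a'.
pose M := absz (Order.max (a + N%:Z) (a' + N'%:Z) - c)%R.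
rewrite -(@wsum_widen u a N c M) ?(@wsum_widen u a' N' c M) //; rewrite /M /c; lia.
Qed.

Lemma wsumD u v a N : wsum (fun m => u m + v m) a N = wsum u a N + wsum v a N.
Proof. exact: big_split. Qed.

Lemma eq_wsum u v a N : u =1 v -> wsum u a N = wsum v a N.
Proof. by move=> eq_uv; apply: eq_bigr => j _; rewrite eq_uv. Qed.

Lemma wsum0 u a N : u =1 (fun=> 0) -> wsum u a N = 0.
Proof. by move=> u0; apply: big1 => j _; rewrite u0. Qed.

Lemma wsum1 u a N m0 : supported_in u a N -> (forall m, m != m0 -> u m = 0) ->
  wsum u a N = u m0.
Proof.
move=> supp u0.
have [/andP[le_a lt_aN]|out] := boolP ((a <= m0) && (m0 < a + N%:Z)); last first.
  rewrite wsum0 ?supp //; first lia.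
  by move=> m; have [->|/u0] := eqVneq m m0; last by []; apply: supp; lia.
have lt_N : (absz (m0 - a)%R < N)%N by lia.
rewrite /wsum (bigD1 (Ordinal lt_N)) //= big1 ?addr0; first by congr u; lia.
move=> j ne_j; apply: u0; apply: contra_neq ne_j => e; apply: val_inj => /=; lia.
Qed.

Lemma wsum_rev u a N c : wsum u a N = wsum (fun m => u (c - m)) (c - a - N%:Z + 1) N.
Proof.
rewrite /wsum (reindex_inj rev_ord_inj); apply: eq_bigr => j _ /=.
by congr u; have := ltn_ord j; lia.
Qed.

End WindowSum.

Definition bounded_below (A : comPzRingType) n (f : int -> 'M[A]_n) :=
  exists L : int, forall k, k < L -> f k = 0.

Record series (A : comPzRingType) (n : nat) :=
  Series { coef :> int -> 'M[A]_n; coef_bounded : bounded_below coef }.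

HB.instance Definition _ A n := gen_eqMixin (series A n).
HB.instance Definition _ A n := gen_choiceMixin (series A n).

Section SeriesRing.
Variables (A : comPzRingType) (n : nat).
Local Notation S := (series A n).
Implicit Types (s t u : S).

Lemma series_ext s t : s =1 t -> s = t.
Proof.
case: s t => f f_bd [g g_bd] /= /funext eq_fg; subst g.
by congr Series; exact: Prop_irrelevance.
Qed.

Definition low s : int := projT1 (cid (coef_bounded s)).

Lemma coef_low s m : m < low s -> s m = 0.
Proof. by rewrite /low; case: cid => L hL /=; exact: hL. Qed.

Definition series0 : S.
Proof. by refine (@Series _ _ (fun _ => 0) _); exists 0. Defined.

Definition seriesN s : S.
Proof.
refine (@Series _ _ (fun k => - s k) _).
by exists (low s) => k lt_k; rewrite coef_low ?oppr0.
Defined.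

Definition seriesD s t : S.
Proof.
refine (@Series _ _ (fun k => s k + t k) _); exists (Order.min (low s) (low t)) => k.
by rewrite lt_min => /andP[lt_s lt_t]; rewrite !coef_low ?addr0.
Defined.

Lemma seriesDA : associative seriesD.
Proof. by move=> s t u; apply: series_ext => k /=; rewrite addrA. Qed.
Lemma seriesDC : commutative seriesD.
Proof. by move=> s t; apply: series_ext => k /=; rewrite addrC. Qed.
Lemma series0D : left_id series0 seriesD.
Proof. by move=> s; apply: series_ext => k /=; rewrite add0r. Qed.
Lemma seriesNK : left_inverse series0 seriesN seriesD.
Proof. by move=> s; apply: series_ext => k /=; rewrite addNr. Qed.

Definition cauchy s t (k m : int) := s m *m t (k - m).

Lemma supported_cauchy s t k a N : (forall m, m < a -> s m = 0) ->
  (forall m, a + N%:Z <= m -> t (k - m) = 0) -> supported_in (cauchy s t k) a N.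
Proof.
by move=> s0 t0 m [lt_m|ge_m]; rewrite /cauchy; [rewrite s0 ?mul0mx | rewrite t0 ?mulmx0].
Qed.

Lemma cauchy_supported s t k a b : (forall m, m < a -> s m = 0) ->
  (forall m, m < b -> t m = 0) -> supported_in (cauchy s t k) a (absz (k - a - b)%R).+1.
Proof. by move=> s0 t0; apply: supported_cauchy => // m ge_m; apply: t0; lia. Qed.

Definition seriesM s t : S.
Proof.
refine (@Series _ _
  (fun k => wsum (cauchy s t k) (low s) (absz (k - low s - low t)%R).+1) _).
exists (low s + low t) => k lt_k; apply: wsum0 => m; rewrite /cauchy.
have [lt_m|ge_m] := ltP m (low s); first by rewrite coef_low ?mul0mx.
by rewrite (@coef_low t) ?mulmx0 //; lia.
Defined.

Lemma seriesM_window s t k a N : (forall m, m < a -> s m = 0) ->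
  (forall m, a + N%:Z <= m -> t (k - m) = 0) -> seriesM s t k = wsum (cauchy s t k) a N.
Proof.
move=> s0 t0; apply: wsum_window; last exact: supported_cauchy.
by apply: cauchy_supported; exact: coef_low.
Qed.

Lemma seriesM_from s t k a b : (forall m, m < a -> s m = 0) -> (forall m, m < b -> t m = 0) ->
  seriesM s t k = wsum (cauchy s t k) a (absz (k - a - b)%R).+1.
Proof. by move=> s0 t0; apply: seriesM_window => // m ge_m; apply: t0; lia. Qed.

Lemma seriesM_below s t a b m : (forall m, m < a -> s m = 0) ->
  (forall m, m < b -> t m = 0) -> m < a + b -> seriesM s t m = 0.
Proof.
move=> s0 t0 lt_m; rewrite (seriesM_from m s0 t0); apply: wsum0 => i; rewrite /cauchy.
have [lt_i|ge_i] := ltP i a; first by rewrite s0 ?mul0mx.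
by rewrite t0 ?mulmx0 //; lia.
Qed.

Lemma seriesMA : associative seriesM.
Proof.
move=> s t u; apply: series_ext => k; symmetry.
set ls := low s; set lt := low t; set lu := low u.
set N := (absz (k - ls - lt - lu)%R).+1.
pose W (i : nat) (p : int) := s (ls + i%:Z) *m t (p - (ls + i%:Z)) *m u (k - p).
have st0 m : m < ls + lt -> seriesM s t m = 0 by apply: seriesM_below; apply: coef_low.
have tu0 m : m < lt + lu -> seriesM t u m = 0 by apply: seriesM_below; apply: coef_low.
rewrite (seriesM_window (N := N) st0); last by move=> m ge_m; apply: coef_low; lia.
rewrite (seriesM_window (N := N) (@coef_low s)); last by move=> m ge_m; apply: tu0; lia.
transitivity (\sum_(i < N) wsum (W i) (ls + lt) N).
  rewrite /wsum /cauchy exchange_big; apply: eq_bigr => j _.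
  rewrite (seriesM_window (N := N) (@coef_low s)); last first.
    by move=> m ge_m; apply: coef_low; have := ltn_ord j; lia.
  rewrite /wsum /cauchy mulmx_suml; apply: eq_bigr => i _.
  by rewrite /W; congr (s _ *m t _ *m u _); lia.
rewrite /wsum; apply: eq_bigr => i _.
rewrite /cauchy (seriesM_window (N := N) (@coef_low t)); last first.
  by move=> m ge_m; apply: coef_low; lia.
rewrite /wsum /cauchy mulmx_sumr.
have -> : \sum_(j < N) s (ls + i) *m (t (lt + j) *m u (k - (ls + i) - (lt + j)))
    = wsum (W i) (ls + i%:Z + lt) N.
  by apply: eq_bigr => j _; rewrite /W mulmxA; congr (s _ *m t _ *m u _); lia.
have W_supp a N' : a <= ls + i%:Z + lt -> k - lu < a + N'%:Z -> supported_in (W i) a N'.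
  move=> le_a lt_a m [lt_m|ge_m]; rewrite /W.
    by rewrite (@coef_low t) ?mulmx0 ?mul0mx //; lia.
  by rewrite (@coef_low u) ?mulmx0 //; lia.
by apply: wsum_window; apply: W_supp; lia.
Qed.

Definition series1 : S.
Proof.
refine (@Series _ _ (fun k => if k == 0 then 1%:M else 0) _).
by exists 0 => k lt_k; case: eqP => // e; rewrite e ltxx in lt_k.
Defined.

Lemma series1_low m : m < 0 -> series1 m = 0.
Proof. by move=> lt_m /=; case: eqP => // e; rewrite e ltxx in lt_m. Qed.

Lemma series1M : left_id series1 seriesM.
Proof.
move=> s; apply: series_ext => k.
rewrite (seriesM_from k series1_low (@coef_low s)) (wsum1 (m0 := 0)).
- by rewrite /cauchy /= ?eqxx mul1mx subr0.
- exact: cauchy_supported series1_low (@coef_low s).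
- by move=> m ne_m; rewrite /cauchy /= (negPf ne_m) mul0mx.
Qed.

Lemma seriesM1 : right_id series1 seriesM.
Proof.
move=> s; apply: series_ext => k.
rewrite (seriesM_from k (@coef_low s) series1_low) (wsum1 (m0 := k)).
- by rewrite /cauchy /= subrr eqxx mulmx1.
- exact: cauchy_supported (@coef_low s) series1_low.
- move=> m ne_m; rewrite /cauchy /=; case: eqP; last by rewrite mulmx0.
  by move=> e; move/eqP: ne_m; case; lia.
Qed.

Lemma seriesMDl : left_distributive seriesM seriesD.
Proof.
move=> s1 s2 t; apply: series_ext => k; set a := Order.min (low s1) (low s2).
have s1_0 m : m < a -> s1 m = 0 by rewrite lt_min => /andP[/coef_low].
have s2_0 m : m < a -> s2 m = 0 by rewrite lt_min => /andP[_ /coef_low].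
have s12_0 m : m < a -> seriesD s1 s2 m = 0 by move=> lt_m /=; rewrite s1_0 ?s2_0 ?addr0.
rewrite -[RHS]/(seriesM s1 t k + seriesM s2 t k) (seriesM_from k s12_0 (@coef_low t)).
rewrite (seriesM_from k s1_0 (@coef_low t)) (seriesM_from k s2_0 (@coef_low t)).
by rewrite -wsumD; apply: eq_wsum => m; rewrite /cauchy /= mulmxDl.
Qed.

Lemma seriesMDr : right_distributive seriesM seriesD.
Proof.
move=> s t1 t2; apply: series_ext => k; set a := Order.min (low t1) (low t2).
have t1_0 m : m < a -> t1 m = 0 by rewrite lt_min => /andP[/coef_low].
have t2_0 m : m < a -> t2 m = 0 by rewrite lt_min => /andP[_ /coef_low].
have t12_0 m : m < a -> seriesD t1 t2 m = 0 by move=> lt_m /=; rewrite t1_0 ?t2_0 ?addr0.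
rewrite -[RHS]/(seriesM s t1 k + seriesM s t2 k) (seriesM_from k (@coef_low s) t12_0).
rewrite (seriesM_from k (@coef_low s) t1_0) (seriesM_from k (@coef_low s) t2_0).
by rewrite -wsumD; apply: eq_wsum => m; rewrite /cauchy /= mulmxDr.
Qed.

End SeriesRing.

HB.instance Definition _ A n := GRing.isZmodule.Build (series A n)
  (@seriesDA A n) (@seriesDC A n) (@series0D A n) (@seriesNK A n).
HB.instance Definition _ A n := GRing.Zmodule_isPzRing.Build (series A n)
  (@seriesMA A n) (@series1M A n) (@seriesM1 A n) (@seriesMDl A n) (@seriesMDr A n).

Section CommutatorCalculus.
Variable R : pzRingType.
Implicit Types (x y : R) (D E : {additive R -> R}).

Definition bracket x y := x * y - y * x.

Definition is_derivation D := forall x y, D (x * y) = D x * y + x * D y.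

Lemma derivation1 D : is_derivation D -> D 1 = 0.
Proof.
move=> derD; have := derD 1 1; rewrite !mulr1 !mul1r => D1.
by apply: (@addrI _ (D 1)); rewrite addr0 -D1.
Qed.

Lemma derivation_bracket D x y : is_derivation D ->
  D (bracket x y) = bracket (D x) y + bracket x (D y).
Proof. by move=> derD; rewrite /bracket raddfB !derD; abel. Qed.

Section Gauge.
Variables (T Ti : R) (TTi : T * Ti = 1) (TiT : Ti * T = 1).

Lemma mulrTTi x : x * T * Ti = x. Proof. by rewrite -mulrA TTi mulr1. Qed.
Lemma mulrTiT x : x * Ti * T = x. Proof. by rewrite -mulrA TiT mulr1. Qed.

Lemma derivation_inv D : is_derivation D -> D Ti = - (Ti * D T) * Ti.
Proof.
move=> derD; have : D Ti * T + Ti * D T = 0 by rewrite -derD TiT derivation1.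
by move/eqP; rewrite addr_eq0 => /eqP <-; rewrite mulrTTi.
Qed.

Lemma derivation_conj D x : is_derivation D ->
  D (Ti * x * T) = Ti * D x * T + bracket (Ti * x * T) (Ti * D T).
Proof. by move=> derD; rewrite !derD (derivation_inv derD) /bracket; expand_ring; rewrite ?mulrTTi; abel. Qed.

Lemma derivation_gauge D E : is_derivation D -> is_derivation E -> (forall x, D (E x) = E (D x)) ->
  D (Ti * E T) = bracket (Ti * E T) (Ti * D T) + E (Ti * D T).
Proof.
move=> derD derE DE.
have DT : D T = T * (Ti * D T) by rewrite mulrA TTi mul1r.
rewrite derD DE [in E (D T)]DT derE (derivation_inv derD) /bracket; expand_ring.
by rewrite TiT mul1r; abel.
Qed.

(* [Ti * E T + Ti * X * T] is the potential of the conjugate [T^-1 (E + X) T]. *)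
Lemma gauge_flow D E X N : is_derivation D -> is_derivation E ->
  (forall x, D (E x) = E (D x)) -> D X = bracket N X - E N ->
  D (Ti * E T + Ti * X * T) =
  bracket (Ti * E T + Ti * X * T) (Ti * D T - Ti * N * T) + E (Ti * D T - Ti * N * T).
Proof.
move=> derD derE DE DX.
have EN : Ti * E N * T = E (Ti * N * T) - bracket (Ti * N * T) (Ti * E T).
  by rewrite (derivation_conj N derE); abel.
rewrite raddfD (derivation_gauge derD derE DE) (derivation_conj X derD) DX.
rewrite [Ti * (_ - _)]mulrBr mulrBl EN !(raddfB E) /bracket; expand_ring.
by rewrite ?mulrTTi; abel.
Qed.

Lemma dressed_flow D b N : is_derivation D -> D b = 0 ->
  (Ti * D T - Ti * N * T) * b = b * (Ti * D T - Ti * N * T) ->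
  D (T * b * Ti) = bracket N (T * b * Ti).
Proof.
move=> derD Db Zb; set Z := Ti * D T - Ti * N * T in Zb.
have DT : D T = T * Z + N * T by rewrite /Z mulrBr !mulrA TTi !mul1r subrK.
have TiDT : Ti * D T = Z + Ti * N * T by rewrite /Z subrK.
rewrite !derD Db (derivation_inv derD) TiDT DT; clearbody Z.
rewrite /bracket; expand_ring; rewrite -(mulrA T Z b) Zb; expand_ring.
by rewrite ?mulrTTi ?mulrTiT ?TTi ?mul1r; abel.
Qed.

Lemma conj_commute b1 b2 : b1 * b2 = b2 * b1 ->
  (T * b1 * Ti) * (T * b2 * Ti) = (T * b2 * Ti) * (T * b1 * Ti).
Proof. by move=> b12; rewrite !mulrA !mulrTiT -(mulrA T b1) b12 mulrA. Qed.

End Gauge.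

Lemma zero_curvature_flows_commute D1 D2 E X N1 N2 :
  is_derivation D1 -> is_derivation D2 -> is_derivation E ->
  (forall x, D1 (E x) = E (D1 x)) -> (forall x, D2 (E x) = E (D2 x)) ->
  D1 X = bracket N1 X - E N1 -> D2 X = bracket N2 X - E N2 ->
  D2 N1 = D1 N2 + bracket N2 N1 ->
  D2 (D1 X) = D1 (D2 X).
Proof.
move=> derD1 derD2 derE D1E D2E D1X D2X curv.
rewrite D1X D2X (raddfB D2) (raddfB D1) !derivation_bracket // D1X D2X D1E D2E curv.
by rewrite (raddfD E) derivation_bracket // /bracket; expand_ring; abel.
Qed.

(* [P] plays the role of the projection [v |-> v_{<= -1}], [N_i] of [M_i_{<= -1}]
   and [Q_i] of [M_i_{>= 0}]. *)
Lemma projected_zero_curvature (P : {additive R -> R}) N1 N2 Q1 Q2 :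
  (N1 + Q1) * (N2 + Q2) = (N2 + Q2) * (N1 + Q1) ->
  P (N1 * N2) = N1 * N2 -> P (N2 * N1) = N2 * N1 ->
  P (Q1 * Q2) = 0 -> P (Q2 * Q1) = 0 ->
  P (bracket N2 (N1 + Q1)) = P (bracket N1 (N2 + Q2)) + bracket N2 N1.
Proof.
move=> M12 PN12 PN21 PQ12 PQ21.
have : P ((N1 + Q1) * (N2 + Q2) - (N2 + Q2) * (N1 + Q1)) = 0 by rewrite M12 subrr raddf0.
rewrite /bracket; expand_ring; rewrite !raddfD !raddfN PN12 PN21 PQ12 PQ21 => curv.
have -> : P (N1 * Q2) = - (N1 * N2 + P (Q1 * N2) - N2 * N1 - P (N2 * Q1) - P (Q2 * N1)).
  by apply/eqP; rewrite -addr_eq0; apply/eqP; rewrite -curv; abel.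
abel.
Qed.

End CommutatorCalculus.

Lemma map_mx_derivationM (A : comPzRingType) n (d : {additive A -> A}) (x y : 'M[A]_n) :
  derivation d -> map_mx d (x *m y) = map_mx d x *m y + x *m map_mx d y.
Proof.
move=> derd; apply/matrixP => i j; rewrite !mxE raddf_sum -big_split.
by apply: eq_bigr => l _; rewrite derd !mxE.
Qed.

Section SeriesOperations.
Variables (A : comPzRingType) (n : nat).
Local Notation S := (series A n).
Implicit Types (s t : S).

Lemma coefD s t k : (s + t) k = s k + t k. Proof. by []. Qed.
Lemma coefB s t k : (s - t) k = s k - t k. Proof. by []. Qed.
Lemma coef0 k : (0 : S) k = 0. Proof. by []. Qed.
Lemma coefM s t : s * t = seriesM s t. Proof. by []. Qed.

Definition series_map (d : {additive A -> A}) s : S.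
Proof.
refine (@Series _ _ (fun k => map_mx d (s k)) _).
by exists (low s) => k lt_k; rewrite coef_low ?map_mx0.
Defined.

Lemma coef_map d s k : series_map d s k = map_mx d (s k). Proof. by []. Qed.

Lemma series_mapB d s t : series_map d (s - t) = series_map d s - series_map d t.
Proof. by apply: series_ext => k; rewrite /= map_mxB. Qed.

Definition negpart s : S.
Proof.
refine (@Series _ _ (fun k => if k <= -1 then s k else 0) _).
by exists (low s) => k lt_k; case: ifP => // _; rewrite coef_low.
Defined.

Lemma coef_negpart s k : negpart s k = if k <= -1 then s k else 0. Proof. by []. Qed.

Lemma negpartB s t : negpart (s - t) = negpart s - negpart t.
Proof. by apply: series_ext => k /=; case: ifP => _ //; rewrite subr0. Qed.

End SeriesOperations.

HB.instance Definition _ A n d := GRing.isZmodMorphism.Build (series A n) (series A n)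
  (@series_map A n d) (@series_mapB A n d).
HB.instance Definition _ A n := GRing.isZmodMorphism.Build (series A n) (series A n)
  (@negpart A n) (@negpartB A n).

Section SeriesDerivations.
Variables (A : comPzRingType) (n : nat).
Local Notation S := (series A n).
Implicit Types (s t : S).

Lemma series_map_derivation (d : {additive A -> A}) :
  derivation d -> is_derivation (series_map d : {additive S -> S}).
Proof.
move=> derd s t; apply: series_ext => k; rewrite coefD coef_map !coefM.
have ds0 m : m < low s -> series_map d s m = 0 by rewrite coef_map => /coef_low ->; rewrite map_mx0.
have dt0 m : m < low t -> series_map d t m = 0 by rewrite coef_map => /coef_low ->; rewrite map_mx0.
rewrite (seriesM_from k (@coef_low _ _ s) (@coef_low _ _ t)).
rewrite (seriesM_from k ds0 (@coef_low _ _ t)) (seriesM_from k (@coef_low _ _ s) dt0).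
by rewrite -wsumD /wsum map_mx_sum; apply: eq_bigr => j _; rewrite /cauchy !coef_map map_mx_derivationM.
Qed.

Lemma series_mapC (d1 d2 : {additive A -> A}) : (forall x, d1 (d2 x) = d2 (d1 x)) ->
  forall s, series_map d1 (series_map d2 s) = series_map d2 (series_map d1 s).
Proof. by move=> d12 s; apply: series_ext => k; apply/matrixP => i j; rewrite !mxE d12. Qed.

Lemma negpart_map d s : negpart (series_map d s) = series_map d (negpart s).
Proof. by apply: series_ext => k; rewrite !(coef_negpart, coef_map); case: ifP; rewrite ?map_mx0. Qed.

Lemma negpart_low s m : m < low s -> negpart s m = 0.
Proof. by move=> lt_m; rewrite coef_negpart coef_low //; case: ifP. Qed.

Lemma negpartM s t : negpart (negpart s * negpart t) = negpart s * negpart t.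
Proof.
apply: series_ext => k; rewrite coef_negpart; case: ifP => // gt_k; symmetry.
rewrite coefM (seriesM_from k (@negpart_low s) (@negpart_low t)); apply: wsum0 => m.
rewrite /cauchy !coef_negpart; case: ifP => le_m; last by rewrite mul0mx.
by rewrite ifF ?mulmx0 //; lia.
Qed.

Lemma negpartM_nonneg s t : negpart ((s - negpart s) * (t - negpart t)) = 0.
Proof.
apply: series_ext => k; rewrite coef_negpart coef0; case: ifP => // le_k.
have nonneg0 (u : S) m : m < low u -> (u - negpart u) m = 0.
  by move=> lt_m; rewrite coefB negpart_low // coef_low // subrr.
rewrite coefM (seriesM_from k (nonneg0 s) (nonneg0 t)); apply: wsum0 => m.
rewrite /cauchy !coefB !coef_negpart; case: ifP => le_m; first by rewrite subrr mul0mx.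
by rewrite ifT ?subrr ?mulmx0 //; lia.
Qed.

End SeriesDerivations.

Arguments series_map_derivation {A n d}.

Section DiagonalSeries.
Variables (A : comPzRingType) (n : nat).
Local Notation S := (series A n).
Implicit Types (s t : S).

Lemma diag_mulmxE (X Y : 'M[A]_n) i j : is_diag_mx X -> (X *m Y) i j = X i i * Y i j.
Proof. by move=> /diag_mxP[d ->]; rewrite mul_diag_mx !mxE eqxx mulr1n. Qed.

Lemma mulmx_diagE (X Y : 'M[A]_n) i j : is_diag_mx X -> (Y *m X) i j = Y i j * X j j.
Proof. by move=> /diag_mxP[d ->]; rewrite mul_mx_diag !mxE eqxx mulr1n. Qed.

Lemma diag_series_commute s t :
  (forall k, is_diag_mx (s k)) -> (forall k, is_diag_mx (t k)) -> s * t = t * s.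
Proof.
move=> sdiag tdiag; apply: series_ext => k; rewrite !coefM.
rewrite (seriesM_from k (@coef_low _ _ s) (@coef_low _ _ t)).
rewrite (seriesM_from k (@coef_low _ _ t) (@coef_low _ _ s)) (wsum_rev _ _ _ k).
have ts_supp : supported_in (cauchy t s k) (k - low s - (absz (k - low s - low t)%R).+1%:Z + 1)
    (absz (k - low s - low t)%R).+1.
  move=> m out_m; rewrite /cauchy.
  have [lt_m|ge_m] := ltP m (low t); first by rewrite coef_low ?mul0mx.
  by rewrite (@coef_low _ _ s) ?mulmx0 //; lia.
rewrite (@eq_wsum _ _ (cauchy t s k)); last first.
  move=> m; rewrite /cauchy (_ : k - (k - m) = m); last by lia.
  by have /diag_mxP[d ->] := sdiag (k - m); have /diag_mxP[e ->] := tdiag m; apply: diag_mxC.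
by apply: wsum_window ts_supp _; apply: cauchy_supported; apply: coef_low.
Qed.

Lemma coefM_entry1 s t k m0 i j :
  (forall m, m != m0 -> (s m *m t (k - m)) i j = 0) ->
  (s * t) k i j = (s m0 *m t (k - m0)) i j.
Proof.
move=> st0; rewrite coefM (seriesM_from k (@coef_low _ _ s) (@coef_low _ _ t)) /wsum summxE.
have st_supp := cauchy_supported (k := k) (@coef_low _ _ s) (@coef_low _ _ t).
apply: (@wsum1 _ (fun m => cauchy s t k m i j) _ _ m0) => [m out_m|m ne_m].
  by rewrite st_supp ?mxE.
exact: st0.
Qed.

Lemma bracket_offdiag_coef (h Z : S) d k i l :
  (forall k, is_diag_mx (h k)) -> (forall k, k < -1 -> h k = 0) ->
  (forall m, m < k -> Z m i l = 0) ->
  (bracket h Z + series_map d Z) (k - 1) i l = (h (-1) i i - h (-1) l l) * Z k i l.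
Proof.
move=> hdiag hlow Z0; rewrite coefD /bracket coefB !mxE.
rewrite (coefM_entry1 (m0 := -1)); last first.
  move=> m ne_m; rewrite diag_mulmxE //.
  case: (ltgtP m (-1)) => [lt_m|gt_m|eq_m]; first by rewrite hlow ?mxE ?mul0r.
    by rewrite Z0 ?mulr0 //; lia.
  by rewrite eq_m eqxx in ne_m.
rewrite (coefM_entry1 (m0 := k)); last first.
  move=> m ne_m; rewrite mulmx_diagE //.
  case: (ltgtP m k) => [lt_m|gt_m|eq_m]; first by rewrite Z0 ?mul0r.
    by rewrite hlow ?mxE ?mulr0 //; lia.
  by rewrite eq_m eqxx in ne_m.
rewrite diag_mulmxE // mulmx_diagE // ?coef_map ?mxE (Z0 (k - 1)) ?raddf0 ?addr0; last by lia.
have -> : k - 1 - -1 = k by lia.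
have -> : k - 1 - k = -1 by lia.
by rewrite mulrBl [Z k i l * _]mulrC.
Qed.

Lemma diag_span_separates (I : finType) (H : I -> 'M[A]_n) i l x :
  (forall D, is_diag_mx D -> exists c : I -> A, D = \sum_a c a *: H a) ->
  i != l -> (forall a, (H a i i - H a l l) * x = 0) -> x = 0.
Proof.
move=> span ne_il Hx.
have /span[c delta_ii] : is_diag_mx (delta_mx i i : 'M[A]_n).
  apply/is_diag_mxP => p q ne_pq; rewrite mxE.
  case: (eqVneq p i) => [ep|]; case: (eqVneq q i) => [eq|] //=.
  by move: ne_pq; rewrite ep eq eqxx.
have entry p : \sum_a c a * H a p p = (delta_mx i i : 'M[A]_n) p p.
  by rewrite delta_ii summxE; apply: eq_bigr => a _; rewrite mxE.
have ne_li : (l == i) = false by rewrite eq_sym (negPf ne_il).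
have := entry i; have := entry l; rewrite !mxE eqxx ne_li /=.
move=> Hl Hi.
transitivity ((\sum_a c a * H a i i - \sum_a c a * H a l l) * x).
  by rewrite Hi Hl subr0 mul1r.
by rewrite -sumrB mulr_suml big1 // => a _; rewrite -mulrBr -mulrA Hx mulr0.
Qed.

(* Comparing the coefficients of [hbar^(k-1)] shows that the off-diagonal part
   of [Z_k] is killed by the leading terms of the [h_a], which span [Diag]. *)
Lemma diag_of_bracket_diag (I : finType) (h : I -> S) (d : I -> {additive A -> A}) (Z : S) :
  (forall a k, is_diag_mx (h a k)) -> (forall a k, k < -1 -> h a k = 0) ->
  (forall D, is_diag_mx D -> exists c : I -> A, D = \sum_a c a *: h a (-1)) ->
  (forall a k, is_diag_mx ((bracket (h a) Z + series_map (d a) Z) k)) ->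
  forall k, is_diag_mx (Z k).
Proof.
move=> hdiag hlow span Zdiag k; apply/is_diag_mxP => i l ne_il.
have ne_il' : i != l by apply: contra_neq ne_il => ->.
suff Z0 (j : nat) k' : k' < low Z + j%:Z -> Z k' i l = 0.
  by apply: (Z0 (absz (k - low Z)%R).+1); lia.
elim: j k' => [|j IH] k' lt_k'; first by rewrite coef_low ?mxE //; lia.
have [|ge_k'] := ltP k' (low Z + j%:Z); first exact: IH.
apply: (diag_span_separates span ne_il') => a.
rewrite -(bracket_offdiag_coef (d a) (hdiag a) (hlow a)); last by move=> m lt_m; apply: IH; lia.
by move/is_diag_mxP: (Zdiag a (k' - 1)); apply.
Qed.

End DiagonalSeries.

Section FromLaurent.
Variables (A : comPzRingType) (n : nat).
Implicit Types (f g : lser A n).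

Definition series_of f : series A n.
Proof. by refine (@Series _ _ (lc f) _); exists (lv f); exact: lvP. Defined.

Lemma series_of_lseq f g : lseq f g -> series_of f = series_of g.
Proof. by move=> fg; apply: series_ext => k; exact: fg. Qed.

Lemma series_ofD f g : series_of (ladd f g) = series_of f + series_of g.
Proof. exact: series_ext. Qed.

Lemma series_ofB f g : series_of (lsub f g) = series_of f - series_of g.
Proof. exact: series_ext. Qed.

Lemma series_ofM f g : series_of (lmul f g) = series_of f * series_of g.
Proof. by apply: series_ext => k; rewrite coefM (seriesM_from k (a := lv f) (b := lv g)) //; exact: lvP. Qed.

Lemma series_of1 : series_of (lone A n) = 1.
Proof. exact: series_ext. Qed.

Lemma series_of_map d f : series_of (ldiff d f) = series_map d (series_of f).
Proof. exact: series_ext. Qed.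

Lemma series_of_trunc f : series_of (ltrunc f) = negpart (series_of f).
Proof. exact: series_ext. Qed.

Lemma series_of_opbr d f g :
  series_of (opbr d f g) = bracket (series_of f) (series_of g) - series_map d (series_of f).
Proof. by rewrite /opbr /lbr !(series_ofB, series_ofM, series_of_map). Qed.

Lemma series_of_opconj d f g h : series_of (opconj d f g h) =
  series_of g * series_map d (series_of f) + series_of g * series_of h * series_of f.
Proof. by rewrite /opconj !(series_ofD, series_ofM, series_of_map). Qed.

Lemma series_map_Lpot (D : {additive A -> A}) (C : 'M[A]_n) :
  series_map D (series_of (Lpot C)) = series_of (lmono (-1) (- map_mx D C)).
Proof. by apply: series_ext => k; rewrite coef_map /=; case: eqP; rewrite ?map_mxN ?map_mx0. Qed.

Lemma coef_Lpot_lead (C : 'M[A]_n) : series_of (Lpot C) (-1) = - C.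
Proof. by rewrite /= ?eqxx. Qed.

Lemma lax_flow_series (D d : {additive A -> A}) (C : 'M[A]_n) (T Tinv b : lser A n) :
  lseq (lmono (-1) (- map_mx D C)) (opbr d (ltrunc (lmul (lmul T b) Tinv)) (Lpot C)) ->
  series_map D (series_of (Lpot C)) =
  bracket (negpart (series_of T * series_of b * series_of Tinv)) (series_of (Lpot C))
  - series_map d (negpart (series_of T * series_of b * series_of Tinv)).
Proof. by move/series_of_lseq; rewrite series_map_Lpot series_of_opbr series_of_trunc !series_ofM. Qed.

End FromLaurent.

Section DressedFlows.
Variables (A : comPzRingType) (n : nat) (dx : 'I_n -> {additive A -> A}).
Hypothesis dx_derivation : forall a, derivation (dx a).
Variables (X h : 'I_n -> series A n) (T Ti : series A n).
Hypotheses (TTi : T * Ti = 1) (TiT : Ti * T = 1).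
Hypothesis h_dressed : forall a, h a = Ti * series_map (dx a) T + Ti * X a * T.
Hypothesis h_diag : forall a k, is_diag_mx (h a k).
Hypothesis h_low : forall a k, k < -1 -> h a k = 0.
Hypothesis h_span : forall D, is_diag_mx D -> exists c : 'I_n -> A, D = \sum_a c a *: h a (-1).

(* [Z = T^-1 D T - T^-1 N T] satisfies [D h_a = [h_a, Z] + d_a Z] with [D h_a]
   diagonal, hence is diagonal and commutes with [B]. *)
Lemma dressed_symmetry_flow (D : {additive A -> A}) (N B : series A n) :
  derivation D -> (forall a u, D (dx a u) = dx a (D u)) ->
  (forall a, series_map D (X a) = bracket N (X a) - series_map (dx a) N) ->
  (forall k, is_diag_mx (B k)) -> series_map D B = 0 ->
  series_map D (T * B * Ti) = bracket N (T * B * Ti).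
Proof.
move=> derD Ddx flowD Bdiag DB.
have derSD : is_derivation (series_map D : {additive series A n -> _}).
  exact: series_map_derivation.
have Zdiag k : is_diag_mx ((Ti * series_map D T - Ti * N * T) k).
  apply: (diag_of_bracket_diag h_diag h_low h_span (d := dx)) => a {}k.
  have := gauge_flow TTi TiT derSD (series_map_derivation (dx_derivation a))
    (series_mapC (Ddx a)) (flowD a).
  rewrite -h_dressed => <-; apply/is_diag_mxP => i j ne_ij.
  by rewrite coef_map mxE; move/is_diag_mxP: (h_diag a k) => ->; rewrite ?raddf0.
by apply: (dressed_flow TTi TiT derSD DB); apply: diag_series_commute.
Qed.

End DressedFlows.

Lemma negpart_zero_curvature (A : comPzRingType) n (D1 D2 : {additive A -> A})
    (M1 M2 : series A n) :
  M1 * M2 = M2 * M1 ->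
  series_map D2 M1 = bracket (negpart M2) M1 -> series_map D1 M2 = bracket (negpart M1) M2 ->
  series_map D2 (negpart M1) = series_map D1 (negpart M2) + bracket (negpart M2) (negpart M1).
Proof.
move=> M12 D2M1 D1M2; rewrite -!negpart_map D2M1 D1M2.
have := projected_zero_curvature (Q1 := M1 - negpart M1) (Q2 := M2 - negpart M2) _
  (negpartM M1 M2) (negpartM M2 M1) (negpartM_nonneg M1 M2) (negpartM_nonneg M2 M1).
by rewrite !subrKC; apply.
Qed.

Unset Implicit Arguments.
Theorem mainTheorem9 (A : comPzRingType) (n : nat)
  (dx : 'I_n -> {additive A -> A}) (D1 D2 : {additive A -> A})
  (hdx : forall a, derivation (dx a))
  (hD1 : derivation D1) (hD2 : derivation D2)
  (hdxdx : forall a b (u : A), dx a (dx b u) = dx b (dx a u))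
  (hD1dx : forall a (u : A), D1 (dx a u) = dx a (D1 u))
  (hD2dx : forall a (u : A), D2 (dx a u) = dx a (D2 u))
  (C : 'I_n -> 'M[A]_n)
  (hcomm : forall a b k, opcomm (dx a) (dx b) (Lpot (C a)) (Lpot (C b)) k = 0)
  (T Tinv : lser A n) (hT : dressing dx C T Tinv)
  (b1 b2 : lser A n)
  (hb1diag : forall k, is_diag_mx (b1 k)) (hb2diag : forall k, is_diag_mx (b2 k))
  (hb1x : forall a k, ldiff (dx a) b1 k = 0) (hb2x : forall a k, ldiff (dx a) b2 k = 0)
  (hb1t : forall k, ldiff D1 b1 k = 0 /\ ldiff D2 b1 k = 0)
  (hb2t : forall k, ldiff D1 b2 k = 0 /\ ldiff D2 b2 k = 0)
  (hflow1 : forall a, lseq (lmono (-1) (- map_mx D1 (C a)))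
                (opbr (dx a) (ltrunc (lmul (lmul T b1) Tinv)) (Lpot (C a))))
  (hflow2 : forall a, lseq (lmono (-1) (- map_mx D2 (C a)))
                (opbr (dx a) (ltrunc (lmul (lmul T b2) Tinv)) (Lpot (C a)))) :
  forall a, map_mx D1 (map_mx D2 (C a)) = map_mx D2 (map_mx D1 (C a)).
Proof.
move=> a0; case: hT => _ [_ [TTi [TiT [h [h_dressed [h_diag [h_low h_span]]]]]]].
set Ts := series_of T; set Tis := series_of Tinv; pose X a := series_of (Lpot (C a)).
have TTis : Ts * Tis = 1 by rewrite -series_ofM -series_of1; apply: series_of_lseq.
have TisT : Tis * Ts = 1 by rewrite -series_ofM -series_of1; apply: series_of_lseq.
have hs_dressed a : series_of (h a) = Tis * series_map (dx a) Ts + Tis * X a * Ts.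
  by rewrite -(series_of_lseq (h_dressed a)) series_of_opconj.
have flow1 a := lax_flow_series (hflow1 a); have flow2 a := lax_flow_series (hflow2 a).
have D2B1 : series_map D2 (series_of b1) = 0 by apply: series_ext => k; exact: (hb1t k).2.
have D1B2 : series_map D1 (series_of b2) = 0 by apply: series_ext => k; exact: (hb2t k).1.
have D2M1 := dressed_symmetry_flow hdx TTis TisT hs_dressed h_diag h_low h_span hD2 hD2dx
  flow2 (B := series_of b1) hb1diag D2B1.
have D1M2 := dressed_symmetry_flow hdx TTis TisT hs_dressed h_diag h_low h_span hD1 hD1dx
  flow1 (B := series_of b2) hb2diag D1B2.
have M12 := conj_commute TisT
  (diag_series_commute (s := series_of b1) (t := series_of b2) hb1diag hb2diag).
have := zero_curvature_flows_commute (series_map_derivation hD1) (series_map_derivation hD2)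
  (series_map_derivation (hdx a0)) (series_mapC (hD1dx a0)) (series_mapC (hD2dx a0))
  (flow1 a0) (flow2 a0) (negpart_zero_curvature M12 D2M1 D1M2).
move/(congr1 (fun s : series A n => s (-1))).
by rewrite !coef_map coef_Lpot_lead !map_mxN => /oppr_inj/esym.
Qed.
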